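(* Let $\Omega$ be a finite search space, let $f$ be an information resource, and let $\mathcal{A}$ be a search algorithm which, run with $f$, produces a random finite sequence $\tilde{P}=(P_1,\dots,P_{|\tilde{P}|})$ of probability distributions on $\Omega$ together with a search history $H$, with joint law $\nu(\cdot\mid f)$. Let $\alpha$ be a rule assigning to each sequence length $n$ a probability distribution $(\alpha_1,\dots,\alpha_n)$ on $\{1,\dots,n\}$. For a target set $t\subseteq\Omega$ define the general probability of success $$q_\alpha(t,f)=\mathbb{E}_{\tilde{P},H}\Big[\sum_{i=1}^{|\tilde{P}|}\alpha_i P_i(w\in t)\,\Big|\, f\Big].$$ Then $q_\alpha$ is decomposable: defining the vector $\mathbf{P}_{\alpha,f}\in\mathbb{R}^{|\Omega|}$ by $\mathbf{P}_{\alpha,f}(x)=\int \sum_{i=1}^{|\tilde{P}|}\alpha_i P_i(x)\,\mathrm{d}\nu(\tilde{P},h\mid f)$ for $x\in\Omega$, $\mathbf{P}_{\alpha,f}$ is a probability distribution on $\Omega$ that does not depend on $t$, and for every $t\subseteq\Omega$, $$q_\alpha(t,f)=\mathbf{t}^\top\mathbf{P}_{\alpha,f},$$ where $\mathbf{t}\in\{0,1\}^{|\Omega|}$ is the indicator vector of $t$.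
   Context: A probability-of-success metric $\phi$ assigns to each target set $t\subseteq\Omega$ and information resource $f$ a success probability. It is called decomposable if for each $f$ there exists a probability vector $\mathbf{P}_{\phi,f}\in\mathbb{R}^{|\Omega|}$ (nonnegative entries summing to $1$), not a function of $t$, such that $\phi(t,f)=\mathbf{t}^\top\mathbf{P}_{\phi,f}$ for all $t$, where $\mathbf{t}$ is the $0/1$ indicator vector of $t$. *)

From HB Require Import structures.
From mathcomp Require Import all_boot all_order all_algebra.
From mathcomp Require Import all_classical all_reals all_analysis.
Set Implicit Arguments. Unset Strict Implicit. Unset Printing Implicit Defensive.
Import Order.TTheory GRing.Theory Num.Theory.
Local Open Scope ring_scope.

Section Defs.
Context {R : realType} {Omega : finType}.

Definition is_prob_vec (p : Omega -> R) : Prop :=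
  (forall w, 0 <= p w) /\ \sum_(w : Omega) p w = 1.

(* alpha n is a probability distribution on {0,...,n-1} (0-indexed) *)
Definition is_weight_rule (alpha : nat -> nat -> R) : Prop :=
  forall n, (0 < n)%N ->
    (forall i, (i < n)%N -> 0 <= alpha n i) /\ \sum_(i < n) alpha n i = 1.

Definition ind_vec (t : {set Omega}) (w : Omega) : R := if w \in t then 1 else 0.

Definition dotv (u v : Omega -> R) : R := \sum_(w : Omega) u w * v w.

Definition mix (alpha : nat -> nat -> R) (s : seq (Omega -> R)) (w : Omega) : R :=
  \sum_(i < size s) alpha (size s) i * nth (fun _ => 0) s i w.

Definition mix_succ (alpha : nat -> nat -> R) (s : seq (Omega -> R))
  (t : {set Omega}) : R :=
  \sum_(i < size s) alpha (size s) i * (\sum_(w in t) nth (fun _ => 0) s i w).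

Definition decomposable (phi : {set Omega} -> R) : Prop :=
  exists P : Omega -> R, is_prob_vec P /\ forall t, phi t = dotv (ind_vec t) P.

End Defs.

(* General probability of success q_alpha(t,f): the outcome (P~, H) of running
   the algorithm with f is modelled as a point x of a measurable space X with law
   nu (= nu(.|f)); Ptil x is the sequence of distributions P~. *)
Definition q_alpha {d} {X : measurableType d} {R : realType} {Omega : finType}
  (nu : probability X R) (Ptil : X -> seq (Omega -> R)) (alpha : nat -> nat -> R)
  (t : {set Omega}) : R :=
  Rintegral nu setT (fun x => mix_succ alpha (Ptil x) t).

Definition P_alpha {d} {X : measurableType d} {R : realType} {Omega : finType}
  (nu : probability X R) (Ptil : X -> seq (Omega -> R)) (alpha : nat -> nat -> R)
  (w : Omega) : R :=
  Rintegral nu setT (fun x => mix alpha (Ptil x) w).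

(** The weighted mixture [mix alpha s] of a nonempty sequence [s] of
    distributions is itself a distribution, and the success probability of a
    run is the mass this mixture gives to [t].  Averaging over the law of the
    run, linearity of the integral turns [q_alpha t] into the mass that the
    averaged mixture [P_alpha] gives to [t], and the average of probability
    vectors is again a probability vector. *)
From HB Require Import structures.
From mathcomp Require Import all_boot all_order all_algebra.
From mathcomp Require Import all_classical all_reals all_analysis.
Import Order.TTheory GRing.Theory Num.Theory.
Local Open Scope ring_scope.

Lemma is_prob_vec_le1 {R : realType} {Omega : finType} {p : Omega -> R} :
  is_prob_vec p -> forall w, p w <= 1.
Proof.
case=> p_ge0 <- w; rewrite (bigD1 w) //= lerDl.
by apply: sumr_ge0 => v _.
Qed.

Lemma dotv_ind_vec {R : realType} {Omega : finType} (t : {set Omega})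
    (p : Omega -> R) :
  dotv (ind_vec t) p = \sum_(w in t) p w.
Proof.
rewrite /dotv [RHS]big_mkcond; apply: eq_bigr => w _.
by rewrite /ind_vec; case: (w \in t); rewrite ?mul1r ?mul0r.
Qed.

Section mixture.
Context {R : realType} {Omega : finType}.
Variables (alpha : nat -> nat -> R) (s : seq (Omega -> R)).

Lemma mix_succE (t : {set Omega}) :
  mix_succ alpha s t = \sum_(w in t) mix alpha s w.
Proof.
rewrite /mix_succ /mix exchange_big /=.
by apply: eq_bigr => i _; rewrite mulr_sumr.
Qed.

Hypotheses (alpha_weight : is_weight_rule alpha) (s_gt0 : (0 < size s)%N)
  (s_prob : forall P, P \in s -> is_prob_vec P).

Let s_nth_prob (i : 'I_(size s)) : is_prob_vec (nth (fun _ => 0) s i).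
Proof. exact/s_prob/mem_nth. Qed.

Lemma mix_ge0 w : 0 <= mix alpha s w.
Proof.
apply: sumr_ge0 => i _; apply: mulr_ge0.
  exact: (alpha_weight _ s_gt0).1 _ (ltn_ord i).
exact: (s_nth_prob i).1.
Qed.

Lemma sum_mix : \sum_(w : Omega) mix alpha s w = 1.
Proof.
rewrite /mix exchange_big /= -[RHS](alpha_weight _ s_gt0).2.
by apply: eq_bigr => i _; rewrite -mulr_sumr (s_nth_prob i).2 mulr1.
Qed.

Lemma is_prob_vec_mix : is_prob_vec (mix alpha s).
Proof. by split; [exact: mix_ge0 | exact: sum_mix]. Qed.

End mixture.

Lemma Rintegral_sum {R : realType} {d : measure_display} {T : measurableType d}
    (mu : {measure set T -> \bar R}) (D : set T) (I : Type)
    (g : I -> T -> R) (s : seq I) (P : pred I) :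
  measurable D -> (forall i, mu.-integrable D (EFin \o g i)) ->
  Rintegral mu D (fun x => \sum_(i <- s | P i) g i x) =
  \sum_(i <- s | P i) Rintegral mu D (g i).
Proof.
move=> mD g_int; elim: s => [|i s IHs].
  under eq_fun do rewrite big_nil.
  by rewrite big_nil Rintegral_cst // mul0r.
under eq_fun do rewrite big_cons.
rewrite big_cons; case: (P i) => //.
rewrite RintegralD // ?IHs //.
have -> : EFin \o (fun x => \sum_(j <- s | P j) g j x)
    = (fun x => \sum_(j <- s | P j) (EFin \o g j) x)%E.
  by apply: funext => x /=; rewrite -sumEFin.
exact: integrable_sum.
Qed.

Section expected_distribution.
Context {R : realType} {Omega : finType} {d : measure_display}
  {X : measurableType d}.
Variables (mu : probability X R) (p : X -> Omega -> R).
Hypotheses (p_prob : forall x, is_prob_vec (p x))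
  (p_meas : forall w, measurable_fun setT (p ^~ w)).

Lemma integrable_prob_coord w : mu.-integrable setT (EFin \o p ^~ w).
Proof.
apply: measurable_bounded_integrable => //.
  by rewrite -ge0_fin_numE ?fin_num_measure.
exists 1; split => // M M_gt1 x _ /=.
rewrite ger0_norm; last exact: (p_prob x).1.
exact: ltW (le_lt_trans (is_prob_vec_le1 (p_prob x) w) M_gt1).
Qed.

Lemma is_prob_vec_Rintegral :
  is_prob_vec (fun w => Rintegral mu setT (p ^~ w)).
Proof.
split=> [w|]; first by apply: Rintegral_ge0 => x _; exact: (p_prob x).1.
rewrite -Rintegral_sum //; last exact: integrable_prob_coord.
under eq_fun do rewrite (p_prob _).2.
rewrite Rintegral_cst // mul1r.
(* [Rintegral_sum] left [mu] seen as a plain measure, which [probability_setT]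
   does not match syntactically. *)
have mu_setT : (mu : measure X R) setT = 1%E := probability_setT mu.
by rewrite mu_setT.
Qed.

End expected_distribution.

Theorem lemma2 (R : realType) (Omega : finType) (d : measure_display)
  (X : measurableType d) (F : Type) (nu : F -> probability X R)
  (Ptil : F -> X -> seq (Omega -> R)) (alpha : nat -> nat -> R)
  (Halpha : is_weight_rule alpha)
  (Hnonempty : forall f x, (0 < size (Ptil f x))%N)
  (Hdist : forall f x P, P \in Ptil f x -> is_prob_vec P)
  (Hmeas : forall f w, measurable_fun setT (fun x => mix alpha (Ptil f x) w))
  (f : F) :
  is_prob_vec (P_alpha (nu f) (Ptil f) alpha) /\
  (forall t : {set Omega},
     q_alpha (nu f) (Ptil f) alpha t = dotv (ind_vec t) (P_alpha (nu f) (Ptil f) alpha)) /\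
  decomposable (q_alpha (nu f) (Ptil f) alpha).
Proof.
have mix_prob x : is_prob_vec (mix alpha (Ptil f x)).
  exact: is_prob_vec_mix Halpha (Hnonempty f x) (Hdist f x).
have P_prob : is_prob_vec (P_alpha (nu f) (Ptil f) alpha).
  exact: is_prob_vec_Rintegral mix_prob (Hmeas f).
have q_dotv t : q_alpha (nu f) (Ptil f) alpha t
    = dotv (ind_vec t) (P_alpha (nu f) (Ptil f) alpha).
  rewrite /q_alpha dotv_ind_vec -Rintegral_sum //; last first.
    exact: integrable_prob_coord mix_prob (Hmeas f).
  by under eq_fun do rewrite mix_succE.
split=> //; split=> //.
by exists (P_alpha (nu f) (Ptil f) alpha).
Qed.
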